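(* If $\mathcal{T}$ is a single-elimination tournament with at least $2$ players and $\sigma$ is a scoring system with distinct subset sums, then \[\dim(\mathcal{T},\sigma)=\max_{x\in M(\mathcal{T})}\Big(|P(x)|-\max_{u\in N^-(x)}|P(u)|\Big).\]
   Context: A single-elimination tournament is a finite directed graph $\mathcal{T}$ such that: (a) $\mathcal{T}$ has exactly one sink (vertex with no out-neighbours); (b) every non-sink vertex has exactly one out-neighbour; (c) $\mathcal{T}$ has no directed cycles; (d) $|N^-(v)|\ne 1$ for every vertex $v$, where $N^-(v)$ denotes the set of in-neighbours of $v$. The players $P(\mathcal{T})$ are the sources and the matches are $M(\mathcal{T})=V(\mathcal{T})\setminus P(\mathcal{T})$. For a vertex $u$, $P(u)$ is the set of players $a$ for which there is a directed walk from $a$ to $u$ (length $0$ allowed). A bracket is a function $B:V(\mathcal{T})\to P(\mathcal{T})$ with $B(a)=a$ for every player $a$ and $B(x)\in\{B(u):u\in N^-(x)\}$ for every match $x$. A scoring system is any function $\sigma:M(\mathcal{T})\to\mathbb{R}_{>0}$; it has distinct subset sums if for any two sets of matches $M,M'\subseteq M(\mathcal{T})$, $\sum_{x\in M}\sigma(x)=\sum_{x\in M'}\sigma(x)$ implies $M=M'$. For brackets $B,B'$ let $\mathrm{score}_\sigma(B,B')=\sum_{x\in M(\mathcal{T}):\,B(x)=B'(x)}\sigma(x)$. A set of brackets $\mathcal{B}$ is $\sigma$-resolving if for every pair of distinct brackets $B\ne B'$ there is $B_i\in\mathcal{B}$ with $\mathrm{score}_\sigma(B_i,B)\ne\mathrm{score}_\sigma(B_i,B')$.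 $\dim(\mathcal{T},\sigma)$ denotes the minimum size of a $\sigma$-resolving set. *)

From HB Require Import structures.
From mathcomp Require Import all_boot all_order all_algebra.
From mathcomp Require Import reals.
Set Implicit Arguments. Unset Strict Implicit. Unset Printing Implicit Defensive.
Import Order.TTheory GRing.Theory Num.Theory.

Section SET.
Variables (T : finType) (e : rel T).

Definition out_nbrs (v : T) : {set T} := [set w | e v w].
Definition in_nbrs (v : T) : {set T} := [set u | e u v].

Definition is_sink (v : T) : bool := out_nbrs v == set0.

Definition single_elim_tournament : Prop :=
  [/\ #|[set v | is_sink v]| = 1,
      (forall v, ~~ is_sink v -> #|out_nbrs v| = 1),
      (forall u v, e u v -> ~~ connect e v u)
    & (forall v, #|in_nbrs v| != 1)].

Definition players : {set T} := [set v | in_nbrs v == set0].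
Definition matches : {set T} := ~: players.

Definition Pset (u : T) : {set T} := [set a in players | connect e a u].

Definition is_bracket (B : {ffun T -> T}) : bool :=
  [forall a in players, B a == a] &&
  [forall x in matches, [exists u in in_nbrs x, B x == B u]].

Variable R : realType.
Local Open Scope ring_scope.
Variable sigma : T -> R.

Definition scoring_system : Prop := forall x, x \in matches -> 0 < sigma x.

Definition distinct_subset_sums : Prop :=
  forall M M' : {set T}, M \subset matches -> M' \subset matches ->
    \sum_(x in M) sigma x = \sum_(x in M') sigma x -> M = M'.

Definition score (B B' : {ffun T -> T}) : R :=
  \sum_(x in matches | B x == B' x) sigma x.

Local Close Scope ring_scope.
Definition resolving (S : {set {ffun T -> T}}) : bool :=
  [forall B in S, is_bracket B] &&
  [forall B, forall B', (is_bracket B && is_bracket B' && (B != B')) ==>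
     [exists Bi in S, score Bi B != score Bi B']].

(* dim(T, sigma): minimum size of a sigma-resolving set of brackets
   (the set of all brackets is resolving, so the minimum is attained;
   the default value #|{ffun T -> T}| is an upper bound anyway). *)
Definition dimT : nat :=
  \big[minn/#|{ffun T -> T}|]_(S : {set {ffun T -> T}} | resolving S) #|S|.

End SET.

From HB Require Import structures.
From mathcomp Require Import all_boot all_order all_algebra.
From mathcomp Require Import reals.
From mathcomp Require Import zify.
Set Implicit Arguments. Unset Strict Implicit. Unset Printing Implicit Defensive.
Import Order.TTheory.

(* Call light the players of P(x) that do not come through a heaviest child of
   x; there are |P(x)| - max_u |P(u)| of them, so the right-hand side is the
   largest number of light players of a match.

   Lower bound: if a resolving set S had fewer brackets than x has light
   players, some two players a, b of P(x) from different children of x would be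
   picked by no member of S to win x.  Let a rival from outside P(x) win every
   match above x; the two brackets that then differ only in a resp. b winning x
   have the same score against every member of S.

   Upper bound: number each player c within the light set of the largest match
   at which c is light, and let bracket i send every match to its heaviest
   player, where the players numbered i weigh the size of their match and all
   others weigh 0.  If c is light at y, every other player of P(y) with the
   same number has a smaller largest match, so bracket (number of c) lets c
   win every match at which c is light.  At a lowest match where two brackets
   disagree, one of the two winners is light, so some member picks exactly one
   of them there, and distinct subset sums turn this into different scores. *)

Section Resolving.
Variables (T : finType) (e : rel T) (R : realType) (sigma : T -> R).

Lemma dimT_eq d :
  (exists2 S, resolving e sigma S & #|S| <= d) ->
  (forall S, resolving e sigma S -> d <= #|S|) -> dimT e sigma = d.
Proof.
move=> [S0 resS0 leS0d] ge_d; apply/eqP; rewrite eqn_leq.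
rewrite /dimT -minEnat.
rewrite (leq_trans (bigmin_le_cond _ (fun S : {set _} => #|S|) resS0)) //=.
elim/big_ind: _ => [|m n|S]; last exact: ge_d.
- exact: leq_trans (ge_d _ resS0) (max_card _).
- by rewrite minEnat leq_min => -> ->.
Qed.

Definition agreement (B B' : {ffun T -> T}) : {set T} :=
  [set x in matches e | B x == B' x].

Lemma mem_agreement B B' x :
  (x \in agreement B B') = (x \in matches e) && (B x == B' x).
Proof. by rewrite /agreement !inE. Qed.

Lemma score_neq (Bi B B' : {ffun T -> T}) y : distinct_subset_sums e sigma ->
  y \in matches e -> (Bi y == B y) != (Bi y == B' y) ->
  score e sigma Bi B != score e sigma Bi B'.
Proof.
move=> dss my split_y; apply/eqP => eq_score.
have sub_matches B'' : agreement Bi B'' \subset matches e.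
  by apply/subsetP => x; rewrite mem_agreement => /andP[].
have score_agreement B'' :
    score e sigma Bi B'' = (\sum_(x in agreement Bi B'') sigma x)%R.
  by apply: eq_bigl => x; rewrite mem_agreement.
move: eq_score; rewrite !score_agreement => /(dss _ _ (sub_matches B) (sub_matches B')).
move/setP/(_ y); rewrite !mem_agreement my /= => eq_y.
by rewrite eq_y eqxx in split_y.
Qed.

End Resolving.

Lemma out_uniq_of_tournament (T : finType) (e : rel T) :
  (forall v, ~~ is_sink e v -> #|out_nbrs e v| = 1) ->
  forall u v w, e u v -> e u w -> v = w.
Proof.
move=> out_deg u v w euv euw.
have /cards1P [z out_u] : #|out_nbrs e u| == 1.
  by rewrite out_deg //; apply/set0Pn; exists v; rewrite inE.
have : (v \in out_nbrs e u) && (w \in out_nbrs e u) by rewrite !inE euv euw.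
by rewrite out_u !in_set1 => /andP [/eqP -> /eqP ->].
Qed.

Section Tournament.
Variables (T : finType) (e : rel T).
Hypothesis out_uniq : forall u v w, e u v -> e u w -> v = w.
Hypothesis acyclic : forall u v, e u v -> ~~ connect e v u.
Hypothesis in_deg_neq1 : forall v, #|in_nbrs e v| != 1.

Local Notation P := (Pset e).

Lemma connect_antisym x y : connect e x y -> connect e y x -> x = y.
Proof.
move=> /connectP [[//|s p] /= /andP [exs pth] ->] conn_yx.
case/negP: (acyclic exs); apply: connect_trans conn_yx.
by apply/connectP; exists p.
Qed.

Lemma connect_first x y :
  connect e x y -> x != y -> exists2 s, e x s & connect e s y.
Proof.
move=> /connectP [[|s p] /=]; first by move=> _ ->; rewrite eqxx.
by case/andP => exs pth -> _; exists s => //; apply/connectP; exists p.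
Qed.

Lemma connect_last x y :
  connect e x y -> x != y -> exists2 c, connect e x c & e c y.
Proof.
move=> /connectP [p pth ->]; elim: p x pth => [|s p IH] x /=.
  by rewrite eqxx.
case/andP => exs pth _; have [last_s|neq_s] := eqVneq s (last s p).
  by exists x; rewrite -?last_s.
have [c conn_sc ecy] := IH s pth neq_s.
by exists c => //; exact: connect_trans (connect1 exs) conn_sc.
Qed.

Lemma connect_comparable a y z :
  connect e a y -> connect e a z -> connect e y z || connect e z y.
Proof.
move=> /connectP [p pth ->]; elim: p a pth => [|s p IH] a /=.
  by move=> _ ->.
case/andP => eas pth conn_az; have [<-|neq_az] := eqVneq a z.
  by rewrite orbC (connect_trans (connect1 eas)) //; apply/connectP; exists p.
have [s' eas' conn_s'z] := connect_first conn_az neq_az.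
by apply: IH pth _; rewrite (out_uniq eas eas').
Qed.

Lemma edge_ind (Q : T -> Prop) :
  (forall v, (forall u, e u v -> Q u) -> Q v) -> forall v, Q v.
Proof.
move=> IH v; have [n] := ubnP #|[set z | connect e z v]|.
elim: n v => // n IHn v lt_n; apply: IH => u euv; apply: IHn.
apply: leq_trans (ltnSE lt_n); apply/proper_card/properP; split.
  by apply/subsetP => z; rewrite !inE => /connect_trans; apply; exact: connect1.
by exists v; rewrite !inE ?connect0 ?(negbTE (acyclic euv)).
Qed.

Lemma player_no_in a v : a \in players e -> e v a = false.
Proof. by rewrite inE => /eqP /setP /(_ v); rewrite !inE. Qed.

Lemma connect_player v a : a \in players e -> connect e v a -> v = a.
Proof.
move=> pa conn_va; apply/eqP/negPn/negP => neq_va.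
by have [c _] := connect_last conn_va neq_va; rewrite player_no_in.
Qed.

Lemma mem_matches x : (x \in matches e) = (x \notin players e).
Proof. by rewrite inE. Qed.

Lemma mem_Pset a x : (a \in P x) = (a \in players e) && connect e a x.
Proof. by rewrite inE. Qed.

Lemma Pset_player a : a \in players e -> P a = [set a].
Proof.
move=> pa; apply/setP => z; rewrite mem_Pset inE.
apply/andP/eqP => [[_ /connect_player ->]|->] //; by rewrite pa connect0.
Qed.

Lemma subset_Pset x y : connect e x y -> P x \subset P y.
Proof.
move=> conn_xy; apply/subsetP => z; rewrite !mem_Pset => /andP [-> conn_zx].
exact: connect_trans conn_zx conn_xy.
Qed.

Lemma Pset_child_inj x u1 u2 a :
  e u1 x -> e u2 x -> a \in P u1 -> a \in P u2 -> u1 = u2.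
Proof.
move=> e1 e2; rewrite !mem_Pset => /andP [_ conn1] /andP [_ conn2].
wlog /andP[conn12]: u1 u2 e1 e2 conn1 conn2 / connect e u1 u2 && (u1 != u2).
  move=> W; have [//|neq12] := eqVneq u1 u2.
  case/orP: (connect_comparable conn1 conn2) => [c12|c21].
    by apply: W; rewrite ?c12.
  by apply/esym/W; rewrite ?c21 // eq_sym.
move=> neq12; have [s eu1s conn_s2] := connect_first conn12 neq12.
rewrite (out_uniq e1 eu1s) in e2 *.
by have := acyclic e2; rewrite conn_s2.
Qed.

Lemma Pset_child x a : x \in matches e -> a \in P x -> exists2 u, e u x & a \in P u.
Proof.
rewrite mem_matches mem_Pset => mx /andP [pa conn_ax].
have [|c conn_ac ecx] := connect_last conn_ax; first by apply: contraNneq mx => <-.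
by exists c; rewrite // mem_Pset pa.
Qed.

Lemma in_nbr_match u v : e u v -> v \in matches e.
Proof. by move=> euv; rewrite !inE; apply/set0Pn; exists u; rewrite inE. Qed.

Lemma exists_in_nbr v : v \in matches e -> exists u, e u v.
Proof. by rewrite !inE => /set0Pn [u]; rewrite inE; exists u. Qed.

Lemma exists_player v : exists a, a \in P v.
Proof.
elim/edge_ind: v => v IH; case: (boolP (v \in players e)) => [pv|mv].
  by exists v; rewrite Pset_player ?set11.
have [u euv] : exists u, e u v by apply: exists_in_nbr; rewrite mem_matches.
have [a au] := IH u euv.
by exists a; exact: subsetP (subset_Pset (connect1 euv)) a au.
Qed.

Lemma exists_sibling c y : e c y -> exists2 c', c' != c & e c' y.
Proof.
move=> ecy; have cy : c \in in_nbrs e y by rewrite inE.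
have := in_deg_neq1 y; rewrite (cardsD1 c) cy add1n eqSS -lt0n card_gt0.
by case/set0Pn => c'; rewrite !inE => /andP[]; exists c'.
Qed.

Lemma Pset_ltn x y : connect e x y -> x != y -> #|P x| < #|P y|.
Proof.
move=> conn_xy neq_xy; have [c conn_xc ecy] := connect_last conn_xy neq_xy.
have [c' neq_c'c ec'y] := exists_sibling ecy; have [a ac'] := exists_player c'.
apply: leq_ltn_trans (subset_leq_card (subset_Pset conn_xc)) _.
apply/proper_card/properP; split; first exact: subset_Pset (connect1 ecy).
exists a; first exact: subsetP (subset_Pset (connect1 ec'y)) a ac'.
by apply: contra neq_c'c => ac; rewrite (Pset_child_inj ec'y ecy ac' ac).
Qed.

Lemma connect_of_leq_card_Pset a y z :
  a \in P y -> a \in P z -> #|P y| <= #|P z| -> connect e y z.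
Proof.
rewrite !mem_Pset => /andP [_ ay] /andP [_ az] le_yz.
case/orP: (connect_comparable ay az) => // conn_zy.
have [->|neq_zy] := eqVneq z y; first exact: connect0.
by have := Pset_ltn conn_zy neq_zy; rewrite ltnNge le_yz.
Qed.

Lemma bracket_player B a : is_bracket e B -> a \in players e -> B a = a.
Proof. by case/andP => /forall_inP fixed _ /fixed /eqP. Qed.

Lemma bracket_match B x : is_bracket e B -> x \in matches e ->
  exists2 u, e u x & B x = B u.
Proof.
case/andP => _ /forall_inP won /won /exists_inP [u].
by rewrite inE => eux /eqP; exists u.
Qed.

Lemma bracket_winner_in B : is_bracket e B -> forall v, B v \in P v.
Proof.
move=> brB v; elim/edge_ind: v => v IH.
case: (boolP (v \in matches e)) => [mv|]; last first.
  by rewrite mem_matches negbK => pv; rewrite bracket_player // Pset_player ?set11.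
have [u euv ->] := bracket_match brB mv.
exact: subsetP (subset_Pset (connect1 euv)) _ (IH u euv).
Qed.

Lemma exists_rival x : x \notin players e ->
  exists2 c, c \notin P x & forall v, connect e x v -> x != v -> c \in P v.
Proof.
move=> npx; case: (pickP (e x)) => [p exp|no_out]; last first.
  (* x is the final: x itself, not being a player, is a rival. *)
  exists x => [|v conn_xv neq_xv]; first by rewrite mem_Pset (negbTE npx).
  by have [s] := connect_first conn_xv neq_xv; rewrite no_out.
have [c' neq_c'x ec'p] := exists_sibling exp; have [c cc'] := exists_player c'.
exists c => [|v conn_xv neq_xv].
  by apply: contra neq_c'x => cx; rewrite (Pset_child_inj ec'p exp cc' cx).
have [s exs conn_sv] := connect_first conn_xv neq_xv.
rewrite -(out_uniq exp exs) in conn_sv.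
exact: subsetP (subset_Pset (connect_trans (connect1 ec'p) conn_sv)) c cc'.
Qed.

Definition heavy_child x : T :=
  if [pick u in in_nbrs e x] is Some u0
  then [arg max_(u > u0 in in_nbrs e x) #|P u|] else x.

Lemma heavy_childP x : x \in matches e ->
  e (heavy_child x) x /\ forall u, e u x -> #|P u| <= #|P (heavy_child x)|.
Proof.
move=> mx; rewrite /heavy_child; case: pickP => [u0 u0x|no_in]; last first.
  by have [u] := exists_in_nbr mx; have := no_in u; rewrite inE => ->.
case: arg_maxnP => // h; rewrite inE => ehx max_h; split=> // u eux.
by apply: max_h; rewrite inE.
Qed.

Lemma heavy_child_player a : a \in players e -> heavy_child a = a.
Proof.
move=> pa; rewrite /heavy_child; case: pickP => [u|//].
by rewrite inE player_no_in.
Qed.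

Lemma bigmax_Pset_in_nbrs x : x \in matches e ->
  \max_(u in in_nbrs e x) #|P u| = #|P (heavy_child x)|.
Proof.
move=> mx; have [ehx max_h] := heavy_childP mx; apply/eqP; rewrite eqn_leq.
rewrite (leq_bigmax_cond (F := fun u => #|P u|)) ?inE // andbT.
by apply/bigmax_leqP => u; rewrite inE; apply: max_h.
Qed.

Definition light x : {set T} := P x :\: P (heavy_child x).

Lemma light_subset x : light x \subset P x.
Proof. exact: subsetDl. Qed.

Lemma light_match x a : a \in light x -> x \in matches e.
Proof.
rewrite mem_matches; apply: contraL => px.
by rewrite /light heavy_child_player // setDv inE.
Qed.

Lemma card_light x : x \in matches e ->
  #|light x| = #|P x| - #|P (heavy_child x)|.
Proof.
move=> mx; have [ehx _] := heavy_childP mx.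
by rewrite cardsD (setIidPr (subset_Pset (connect1 ehx))).
Qed.

Lemma light_above x y a b : a \in P x -> b \in P x ->
  connect e x y -> x != y -> a \in light y -> b \in light y.
Proof.
move=> ax bx conn_xy neq_xy a_light.
have [c conn_xc ecy] := connect_last conn_xy neq_xy.
have [ehy _] := heavy_childP (light_match a_light).
have sub_xc := subsetP (subset_Pset conn_xc).
have [ac bc] := (sub_xc a ax, sub_xc b bx).
move: a_light; rewrite !in_setD (subsetP (subset_Pset (connect1 ecy)) b bc) andbT.
case/andP => a_not_heavy _; apply: contra a_not_heavy => b_heavy.
by rewrite -(Pset_child_inj ecy ehy bc b_heavy).
Qed.

Definition seeded_winner (s : seq T) v : T := head v [seq a <- s | a \in P v].

Definition seeded_bracket (s : seq T) : {ffun T -> T} :=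
  [ffun v => seeded_winner s v].

Lemma seeded_winner_cons c s v :
  seeded_winner (c :: s) v = if c \in P v then c else seeded_winner s v.
Proof. by rewrite /seeded_winner /=; case: ifP. Qed.

Lemma seeded_winner_swap a b s v : ~~ ((a \in P v) && (b \in P v)) ->
  seeded_winner [:: a, b & s] v = seeded_winner [:: b, a & s] v.
Proof. by rewrite !seeded_winner_cons; case: (a \in P v); case: (b \in P v). Qed.

Section Seeding.
Variable s : seq T.
Hypothesis seed_players : {subset players e <= s}.

Lemma mem_seed_filter a v : a \in P v -> a \in [seq b <- s | b \in P v].
Proof.
move=> av; rewrite mem_filter av seed_players //.
by move: av; rewrite mem_Pset => /andP[].
Qed.

Lemma seeded_winner_filter v :
  exists t, [seq a <- s | a \in P v] = seeded_winner s v :: t.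
Proof.
have [a /mem_seed_filter] := exists_player v.
by rewrite /seeded_winner; case: [seq b <- s | b \in P v] => // z t _; exists t.
Qed.

Lemma seeded_winner_in v : seeded_winner s v \in P v.
Proof.
have [t def_s] := seeded_winner_filter v.
by have := mem_head (seeded_winner s v) t; rewrite -def_s mem_filter => /andP[].
Qed.

Lemma seeded_winner_sub u v : P u \subset P v ->
  seeded_winner s v \in P u -> seeded_winner s u = seeded_winner s v.
Proof.
move=> sub_uv win_u; have [t def_v] := seeded_winner_filter v.
have def_u : [seq a <- s | a \in P u] = [seq a <- [seq a <- s | a \in P v] | a \in P u].
  rewrite -filter_predI; apply: eq_filter => a /=.
  by case: (boolP (a \in P u)) => // /(subsetP sub_uv) ->.
by rewrite /seeded_winner def_u def_v /= win_u.
Qed.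

Lemma seeded_bracketP : is_bracket e (seeded_bracket s).
Proof.
apply/andP; split; apply/forall_inP.
  by move=> a pa; have := seeded_winner_in a; rewrite ffunE Pset_player // inE.
move=> x mx; rewrite ffunE; have [u eux win_u] := Pset_child mx (seeded_winner_in x).
apply/exists_inP; exists u; first by rewrite inE.
by rewrite ffunE (seeded_winner_sub (subset_Pset (connect1 eux)) win_u).
Qed.

Lemma seeded_winner_sorted (w : T -> nat) v a :
  sorted (fun b c => w c <= w b) s -> a \in P v ->
  (forall b, b \in P v -> b != a -> w b < w a) -> seeded_winner s v = a.
Proof.
move=> sorted_s av max_a; have [t def_v] := seeded_winner_filter v.
have le_tr : transitive (fun b c => w c <= w b).
  by move=> b c d le_bc le_cd; exact: leq_trans le_cd le_bc.
apply/eqP/negPn/negP => neq_a; have := max_a _ (seeded_winner_in v) neq_a.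
have := sorted_filter le_tr (fun b => b \in P v) sorted_s; rewrite def_v /=.
move/(order_path_min le_tr)/allP/(_ a); rewrite ltnNge => -> //.
by have := mem_seed_filter av; rewrite def_v inE eq_sym (negbTE neq_a).
Qed.

End Seeding.

Definition weight_seeding (w : T -> nat) : seq T :=
  sort (fun a b => w b <= w a) (enum T).

Lemma weight_seeding_winner w v a : a \in P v ->
  (forall b, b \in P v -> b != a -> w b < w a) ->
  seeded_winner (weight_seeding w) v = a.
Proof.
apply: seeded_winner_sorted; first by move=> b _; rewrite mem_sort mem_enum.
by apply: sort_sorted => b c; exact: leq_total.
Qed.

Lemma brackets_split_at x u a b : x \in matches e -> e u x ->
  a \in P u -> b \in P x -> b \notin P u ->
  exists B B' : {ffun T -> T}, [/\ is_bracket e B, is_bracket e B',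
    B x = a, B' x = b & forall v, v != x -> B v = B' v].
Proof.
rewrite mem_matches => npx eux au bx b_not_u.
have [c c_not_x c_above] := exists_rival npx.
have sub_ux := subsetP (subset_Pset (connect1 eux)).
have full a' b' : {subset players e <= [:: c, a', b' & enum T]}.
  by move=> z _; rewrite !inE mem_enum !orbT.
exists (seeded_bracket [:: c, a, b & enum T]), (seeded_bracket [:: c, b, a & enum T]).
split; [exact: seeded_bracketP (full a b) | exact: seeded_bracketP (full b a) | | |].
- by rewrite ffunE !seeded_winner_cons (negbTE c_not_x) sub_ux.
- by rewrite ffunE !seeded_winner_cons (negbTE c_not_x) bx.
move=> v neq_vx; rewrite !ffunE !(seeded_winner_cons c); case: ifP => // c_not_v.
apply: seeded_winner_swap; apply/andP => -[av bv].
move: (av) (sub_ux a au); rewrite !mem_Pset => /andP [_ conn_av] /andP [_ conn_ax].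
case/orP: (connect_comparable conn_ax conn_av) => [conn_xv|conn_vx].
  by rewrite c_above // eq_sym in c_not_v.
have [w conn_vw ewx] := connect_last conn_vx neq_vx.
have sub_vw := subsetP (subset_Pset conn_vw).
by move: b_not_u; rewrite -(Pset_child_inj ewx eux (sub_vw a av) au) sub_vw.
Qed.

Lemma exists_split_pair (C : {set T}) x : x \in matches e -> #|C| < #|light x| ->
  exists u a b, [/\ e u x, a \in P u :\: C & b \in P x :\: (P u :|: C)].
Proof.
move=> mx lt_C; have [ehx max_h] := heavy_childP mx.
have escape u : e u x -> exists2 b, b \in P x :\: C & b \notin P u.
  move=> eux; suff /subsetPn [b] : ~~ (P x :\: C \subset P u) by exists b.
  apply: contraTN lt_C => sub; rewrite -leqNgt card_light //.
  have : #|P x| <= #|C| + #|P u|.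
    apply: leq_trans (leq_card_setU C (P u)); apply: subset_leq_card.
    apply/subsetP => z zx; rewrite in_setU; case: (boolP (z \in C)) => //= zC.
    by apply: (subsetP sub); rewrite in_setD zC.
  by have := max_h u eux; lia.
have [a + a_not_h] := escape _ ehx; rewrite in_setD => /andP [aC ax].
have [u eux au] := Pset_child mx ax; have [b + b_not_u] := escape _ eux.
rewrite in_setD => /andP [bC bx]; exists u, a, b.
by rewrite !in_setD in_setU negb_or aC au b_not_u bC bx.
Qed.

Lemma resolving_card_ge (R : realType) (sigma : T -> R) S x :
  resolving e sigma S -> x \in matches e -> #|light x| <= #|S|.
Proof.
case/andP => _ /forallP separates mx; rewrite leqNgt; apply/negP => lt_S.
pose C := [set B x | B : {ffun T -> T} in S].
have lt_C : #|C| < #|light x| by apply: leq_ltn_trans lt_S; exact: leq_imset_card.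
have [u [a [b []]]] := exists_split_pair mx lt_C.
rewrite !in_setD in_setU negb_or => eux /andP [aC au] /andP [/andP [b_not_u bC] bx].
have [B [B' [brB brB' Bx B'x agree]]] := brackets_split_at mx eux au bx b_not_u.
have neq_BB' : B != B'.
  by apply: contraNneq b_not_u => eqB; rewrite -B'x -eqB Bx.
have := implyP (forallP (separates B) B'); rewrite brB brB' neq_BB'.
case/(_ isT)/exists_inP => Bi BiS.
apply/negP; rewrite negbK; apply/eqP/eq_bigl => v.
have [->|neq_vx] := eqVneq v x; last by rewrite agree.
have BiC : Bi x \in C by apply: imset_f.
have BiCa : (Bi x == a) = false by apply: contraNF aC => /eqP <-.
have BiCb : (Bi x == b) = false by apply: contraNF bC => /eqP <-.
by rewrite Bx B'x BiCa BiCb.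
Qed.

Definition top_match a : T :=
  if [pick y | a \in light y] is Some y0
  then [arg max_(y > y0 | a \in light y) #|P y|] else a.

Lemma top_matchP a y : a \in light y ->
  a \in light (top_match a) /\ forall z, a \in light z -> #|P z| <= #|P (top_match a)|.
Proof.
move=> ay; rewrite /top_match; case: pickP => [y0 ay0|no_y]; last by rewrite no_y in ay.
by case: arg_maxnP.
Qed.

Definition label a : nat := index a (enum (light (top_match a))).

Lemma label_lt a y : a \in light y -> label a < #|light (top_match a)|.
Proof. by case/top_matchP => a_top _; rewrite /label cardE index_mem mem_enum. Qed.

Lemma top_match_ltn y b c : c \in light y -> b \in P y -> b != c ->
  b \in light (top_match b) -> label b = label c ->
  #|P (top_match b)| < #|P (top_match c)|.
Proof.
move=> cy by_ neq_bc b_top eq_label; have [c_top max_c] := top_matchP cy.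
set t := top_match c in c_top max_c *; set tb := top_match b in b_top eq_label *.
have [cy' ct] := (subsetP (light_subset y) c cy, subsetP (light_subset t) c c_top).
have le_yt := max_c y cy.
rewrite ltnNge; apply/negP => le_t_tb.
have conn_ytb : connect e y tb.
  apply: (connect_of_leq_card_Pset by_ (subsetP (light_subset tb) b b_top)).
  exact: leq_trans le_yt le_t_tb.
have c_tb : c \in light tb.
  have [<-|neq_ytb] := eqVneq y tb; first exact: cy.
  exact: light_above by_ cy' conn_ytb neq_ytb b_top.
have ctb := subsetP (light_subset tb) c c_tb.
have le_tb_t := max_c tb c_tb.
have eq_t : tb = t.
  apply: connect_antisym; first exact: connect_of_leq_card_Pset ctb ct le_tb_t.
  exact: connect_of_leq_card_Pset ct ctb le_t_tb.
move: eq_label; rewrite /label -/t -/tb eq_t => eq_index.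
have b_t : b \in light t by rewrite -eq_t.
by move/eqP: neq_bc; apply; apply: (index_inj c _ _ eq_index); rewrite mem_enum.
Qed.

Definition label_weight (i : nat) a : nat :=
  if [exists y, a \in light y] && (label a == i) then #|P (top_match a)| else 0.

Lemma label_winner y c : c \in light y ->
  seeded_winner (weight_seeding (label_weight (label c))) y = c.
Proof.
move=> cy; have [c_top _] := top_matchP cy.
apply: weight_seeding_winner => [|b by_ neq_bc].
  exact: subsetP (light_subset y) c cy.
have c_has_top : [exists y, c \in light y] by apply/existsP; exists y.
rewrite /label_weight c_has_top eqxx /=; case: ifP => [/andP [/existsP [z bz] /eqP]|_].
  by have [b_top _] := top_matchP bz; exact: top_match_ltn cy by_ neq_bc b_top.
by rewrite card_gt0; apply/set0Pn; exists c; exact: subsetP (light_subset _) c c_top.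
Qed.

Definition label_brackets (d : nat) : {set {ffun T -> T}} :=
  [set seeded_bracket (weight_seeding (label_weight i)) | i : 'I_d].

Lemma exists_min_disagreement (B B' : {ffun T -> T}) : B != B' ->
  exists y, B y != B' y /\ forall u, e u y -> B u = B' u.
Proof.
move=> neq_BB'.
have : [exists y, (B y != B' y) && [forall u, e u y ==> (B u == B' u)]].
  apply: contraNT neq_BB' => /existsPn no_min; apply/eqP/ffunP => v.
  elim/edge_ind: v => v agree; apply/eqP; move: (no_min v).
  by rewrite negb_and negbK => /orP [//|/forallP []] u; apply/implyP => /agree ->.
case/existsP => y /andP [neq_y /forallP agree]; exists y; split=> // u euy.
exact/eqP/(implyP (agree u)).
Qed.

Lemma bracket_winner_light B y u : is_bracket e B -> e u y -> B y = B u ->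
  u != heavy_child y -> B y \in light y.
Proof.
move=> brB euy Byu neq_uh; have Bu := bracket_winner_in brB u.
rewrite in_setD Byu (subsetP (subset_Pset (connect1 euy))) // andbT.
have [ehy _] := heavy_childP (in_nbr_match euy).
by apply: contra neq_uh => Bh; rewrite (Pset_child_inj euy ehy Bu Bh).
Qed.

Lemma light_separates B B' y : is_bracket e B -> is_bracket e B' ->
  y \in matches e -> B y != B' y -> (forall u, e u y -> B u = B' u) ->
  exists2 c, c \in light y & (c == B y) != (c == B' y).
Proof.
move=> brB brB' my neq_y agree.
have [[u euy Byu] [u' eu'y B'yu']] := (bracket_match brB my, bracket_match brB' my).
have neq_uu' : u != u'.
  by apply: contraNneq neq_y => eq_u; rewrite Byu B'yu' -eq_u agree.
have [eq_uh|neq_uh] := eqVneq u (heavy_child y).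
  exists (B' y); last by rewrite eqxx [B' y == _]eq_sym (negbTE neq_y).
  by apply: bracket_winner_light B'yu' _; rewrite // -eq_uh eq_sym.
by exists (B y); [exact: bracket_winner_light Byu neq_uh | rewrite eqxx (negbTE neq_y)].
Qed.

Lemma label_brackets_resolving (R : realType) (sigma : T -> R) :
  distinct_subset_sums e sigma ->
  resolving e sigma (label_brackets (\max_(x in matches e) #|light x|)).
Proof.
move=> dss; apply/andP; split.
  apply/forall_inP => B /imsetP [i _ ->]; apply: seeded_bracketP => z _.
  by rewrite mem_sort mem_enum.
apply/forallP => B; apply/forallP => B'.
apply/implyP => /andP [/andP [brB brB'] neq_BB'].
have [y [neq_y agree]] := exists_min_disagreement neq_BB'.
have my : y \in matches e.
  by rewrite mem_matches; apply: contra neq_y => py; rewrite !bracket_player.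
have [c cy split_c] := light_separates brB brB' my neq_y agree.
have [c_top _] := top_matchP cy.
have lt_label : label c < \max_(x in matches e) #|light x|.
  apply: leq_trans (label_lt cy) _.
  by apply: leq_bigmax_cond; exact: light_match c_top.
pose i := Ordinal lt_label.
apply/exists_inP; exists (seeded_bracket (weight_seeding (label_weight i))).
  by apply/imsetP; exists i.
by apply: (score_neq dss my); rewrite !ffunE /= label_winner.
Qed.

Theorem dimT_single_elim (R : realType) (sigma : T -> R) :
  distinct_subset_sums e sigma ->
  dimT e sigma = \max_(x in matches e) #|light x|.
Proof.
move=> dss; apply: dimT_eq.
  exists (label_brackets (\max_(x in matches e) #|light x|)).
    exact: label_brackets_resolving.
  by apply: leq_trans (leq_imset_card _ _) _; rewrite card_ord.
by move=> S resS; apply/bigmax_leqP => x mx; exact: resolving_card_ge resS mx.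
Qed.

End Tournament.

Theorem lemma5p7 (T : finType) (e : rel T) (R : realType) (sigma : T -> R) :
  single_elim_tournament e ->
  2 <= #|players e| ->
  scoring_system e sigma ->
  distinct_subset_sums e sigma ->
  dimT e sigma =
    \max_(x in matches e) (#|Pset e x| - \max_(u in in_nbrs e x) #|Pset e u|).
Proof.
move=> [_ out_deg acyclic in_deg_neq1] _ _ dss.
have out_uniq := out_uniq_of_tournament out_deg.
rewrite (dimT_single_elim out_uniq acyclic in_deg_neq1 dss).
by apply: eq_bigr => x mx; rewrite bigmax_Pset_in_nbrs // card_light.
Qed.
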